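(* Let $n\ge 3$, $k\ge 3$, and let $\alpha=a_1a_2\cdots a_n\in\mathbf{A}_k(n)$. Let $j$ be the index of the last symbol of $\alpha$ different from $k-1$, and $\ell$ the index of the second-last symbol of $\alpha$ different from $k-1$. If (i) $a_n<k-1$, or (ii) $a_j<k-2$, or (iii) $a_1\cdots a_\ell$ is not a palindrome, then $\mathrm{LastNonMax}(\alpha)\in\mathbf{A}_k(n)$. Otherwise (i.e., $a_n=k-1$, $a_j=k-2$, and $a_1\cdots a_\ell$ is a palindrome), $\mathrm{LastNonMax}(\alpha)$ is a symmetric bracelet.
   Context: Let $\Sigma=\{0,1,\dots,k-1\}$. Strings are compared lexicographically ($\alpha<\beta$ if $\alpha$ is a proper prefix of $\beta$, or $\alpha$ has the smaller symbol at the first index where they differ). For $\alpha=a_1\cdots a_n$, $\alpha^R=a_n\cdots a_1$; $\alpha$ is a palindrome if $\alpha=\alpha^R$. $[\alpha]$ is the set of rotations of $\alpha$. $\alpha$ is a necklace if it is the lexicographically smallest element of $[\alpha]$; a bracelet if it is the lexicographically smallest element of $[\alpha]\cup[\alpha^R]$. A necklace $\alpha$ is symmetric if $\alpha^R\in[\alpha]$, asymmetric otherwise. $\mathbf{A}_k(n)$ is the set of asymmetric bracelets of length $n$ over $\Sigma$. For $\alpha\neq(k-1)^n$ with $j$ the index of its last symbol different from $k-1$, $\mathrm{LastNonMax}(\alpha)=a_1\cdots a_{j-1}(a_j+1)(k-1)^{n-j}$. *)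

From mathcomp Require Import all_boot.
Set Implicit Arguments. Unset Strict Implicit. Unset Printing Implicit Defensive.

(* Strings over {0,...,k-1} are represented as [seq nat] whose entries are < k.
   Positions are 1-based in the paper: a_i = nth 0 s i.-1. *)

Definition over_alphabet (k : nat) (s : seq nat) : bool := all (fun x => x < k) s.

Fixpoint lex_le (a b : seq nat) : bool :=
  match a, b with
  | [::], _ => true
  | _ :: _, [::] => false
  | x :: a', y :: b' => (x < y) || ((x == y) && lex_le a' b')
  end.

Definition in_rotations (t s : seq nat) : bool :=
  [exists i : 'I_(size s), rot i s == t].

Definition is_necklace (s : seq nat) : bool :=
  [forall i : 'I_(size s), lex_le s (rot i s)].

Definition is_bracelet (s : seq nat) : bool :=
  [forall i : 'I_(size s), lex_le s (rot i s) && lex_le s (rot i (rev s))].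

Definition is_palindrome (s : seq nat) : bool := s == rev s.

Definition symmetric_necklace (s : seq nat) : bool :=
  is_necklace s && in_rotations (rev s) s.

Definition asymmetric_necklace (s : seq nat) : bool :=
  is_necklace s && ~~ in_rotations (rev s) s.

Definition in_A (k n : nat) (s : seq nat) : bool :=
  [&& size s == n, over_alphabet k s, is_bracelet s & asymmetric_necklace s].

Definition symmetric_bracelet (s : seq nat) : bool :=
  is_bracelet s && symmetric_necklace s.

(* LastNonMax(s) = a_1 ... a_{j-1} (a_j + 1) (k-1)^{n-j},
   j the index of the last symbol different from k-1. *)
Definition LastNonMax (k : nat) (s : seq nat) : seq nat :=
  let m := find (fun x => x != k.-1) (rev s) in
  let j := size s - m in
  take j.-1 s ++ (nth 0 s j.-1).+1 :: nseq m k.-1.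

From mathcomp Require Import all_boot zify.

(* Write alpha = u a M^m with M = k-1 and a < M, so that LastNonMax alpha is
   beta = u (a+1) M^m.  A rotation of beta starting inside u compares with beta
   as the corresponding rotation of alpha does, except that the raised letter
   can only make the rotation larger; a rotation starting at a+1 or in the
   final run begins with a letter exceeding a_1 <= a.  The same holds for the
   reversed rotations, so beta is a bracelet.  If rev beta is a rotation of
   beta, then beta = p q with p a palindromic prefix of u and q a palindrome.
   Asymmetry of alpha rules out q = M^m (a+1) M^m, and the only other option is
   q = M^r (a+1) M^m with r < m and a+1 = M; then |p| = l and a_1...a_l is a
   palindrome.  Conversely, in that case beta = p M^(n-l) is symmetric. *)

Set Implicit Arguments. Unset Strict Implicit. Unset Printing Implicit Defensive.

Lemma lex_le_refl s : lex_le s s.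
Proof. by elim: s => //= x s ->; rewrite eqxx ltnn. Qed.

Lemma lex_le_trans b a c : lex_le a b -> lex_le b c -> lex_le a c.
Proof.
elim: a b c => // x a IH [|y b] [|z c] //=.
case: (ltngtP x y) => //= hxy; case: (ltngtP y z) => //= hyz.
- by rewrite (ltn_trans hxy hyz).
- by rewrite -hyz hxy.
- by rewrite hxy hyz.
- by rewrite -hyz hxy ltnn eqxx /=; apply: IH.
Qed.

Lemma lex_le_cat s1 s2 t1 t2 : size s1 = size t1 ->
  lex_le (s1 ++ s2) (t1 ++ t2) = if s1 == t1 then lex_le s2 t2 else lex_le s1 t1.
Proof.
elim: s1 t1 => [|x s1 IH] [|y t1] //= [size_eq].
by rewrite eqseq_cons IH //; case: (ltngtP x y).
Qed.

Lemma lex_le_cons_leq x y s t : lex_le (x :: s) (y :: t) -> x <= y.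
Proof. by move=> /= /orP[/ltnW|/andP[/eqP -> _]]. Qed.

Lemma lex_le_nseq M s : all (fun x => x <= M) s -> lex_le s (nseq (size s) M).
Proof.
elim: s => //= x s IH /andP[]; rewrite leq_eqVlt => /orP[/eqP ->|->] // /IH.
by rewrite ltnn eqxx.
Qed.

(* [rcons p a] is strictly below [rcons p a.+1], so the tails do not matter. *)
Lemma lex_le_cat_rcons_succ q p a r1 r2 :
  size q = (size p).+1 -> lex_le q (rcons p a) ->
  lex_le (q ++ r1) (rcons p a.+1 ++ r2).
Proof.
move=> size_q le_q; rewrite lex_le_cat ?size_rcons //.
have lt_a : lex_le (rcons p a) (rcons p a.+1).
  by rewrite -!cats1 lex_le_cat // eqxx /= ltnSn.
case: eqP => [q_eq|_]; last exact: lex_le_trans lt_a.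
move: le_q; rewrite q_eq -!cats1 lex_le_cat // eqxx => /lex_le_cons_leq.
by rewrite ltnn.
Qed.

Lemma rev_cat_cons T (s t : seq T) b : rev (s ++ b :: t) = rev t ++ b :: rev s.
Proof. by rewrite rev_cat rev_cons cat_rcons. Qed.

Lemma rot_catl T i (s t : seq T) : i <= size s ->
  rot i (s ++ t) = drop i s ++ t ++ take i s.
Proof.
move=> le_i; have := rot_size_cat (take i s) (drop i s ++ t).
by rewrite size_takel // catA cat_take_drop -catA.
Qed.

Lemma is_braceletP s :
  reflect ((forall i, i < size s -> lex_le s (rot i s)) /\
           (forall t, 0 < t <= size s -> lex_le s (rev (rot t s))))
          (is_bracelet s).
Proof.
apply: (iffP forallP) => [B | [Brot Brev] [i lt_i]] /=.
  split=> [i lt_i | t t_bnd]; first by case/andP: (B (Ordinal lt_i)).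
  have lt_i : size s - t < size s by lia.
  case/andP: (B (Ordinal lt_i)) => _ /=; rewrite -rev_rotr /rotr.
  by have -> : size s - (size s - t) = t by lia.
by rewrite Brot //= -rev_rotr /rotr Brev //; lia.
Qed.

Lemma bracelet_necklace s : is_bracelet s -> is_necklace s.
Proof. by move=> /is_braceletP[Brot _]; apply/forallP => -[i /= /Brot]. Qed.

Lemma in_rotations_revP s :
  reflect (exists2 t, 0 < t <= size s & rot t s = rev s) (in_rotations (rev s) s).
Proof.
apply: (iffP existsP) => [[[i lt_i] /= /eqP rot_i] | [t t_bnd rot_t]].
  have [i0|i_gt0] := posnP i; last by exists i; first lia.
  by exists (size s); [lia | rewrite rot_size -rot_i i0 rot0].
have [t_eq|t_lt] := eqVneq t (size s).
  have lt_0 : 0 < size s by lia.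
  by exists (Ordinal lt_0); rewrite /= rot0 -rot_t t_eq rot_size.
have lt_t : t < size s by lia.
by exists (Ordinal lt_t); rewrite rot_t.
Qed.

Lemma rot_cat_palindromes T (p q : seq T) : p = rev p -> q = rev q ->
  rot (size p) (p ++ q) = rev (p ++ q).
Proof. by move=> p_pal q_pal; rewrite rot_size_cat rev_cat -p_pal -q_pal. Qed.

Lemma nth_rot0 T x0 (s : seq T) i : i < size s -> nth x0 (rot i s) 0 = nth x0 s i.
Proof. by move=> lt_i; rewrite /rot nth_cat size_drop subn_gt0 lt_i nth_drop addn0. Qed.

Lemma nth_rev_rot0 T x0 (s : seq T) t : 0 < t <= size s ->
  nth x0 (rev (rot t s)) 0 = nth x0 s t.-1.
Proof.
case/andP=> t_gt0 le_ts; rewrite /rot rev_cat nth_cat size_rev size_takel // t_gt0.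
by rewrite nth_rev size_takel // subn1 nth_take // ltn_predL.
Qed.

Lemma lex_le_nth0 s t : 0 < size t -> nth 0 s 0 < nth 0 t 0 -> lex_le s t.
Proof. by case: s => // x s; case: t => //= y t _ ->. Qed.

Section MaxRun.

Variables (M m : nat).
Local Notation K := (nseq m M).

Lemma lex_le_cat_nseq_rev c : all (fun y => y <= M) c ->
  lex_le (c ++ K) (K ++ rev c) =
  (take m c != K) || lex_le (drop m c) (rev (drop m c)).
Proof.
move=> c_le; have [le_cm | lt_mc] := leqP (size c) m.
  have K_split : K = nseq (size c) M ++ nseq (m - size c) M.
    by rewrite -nseqD subnKC.
  rewrite drop_oversize //= orbT [in X in lex_le _ X]K_split -catA.
  rewrite lex_le_cat ?size_nseq //; case: eqP => [c_eq | _]; last exact: lex_le_nseq.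
  by rewrite [in rev _]c_eq rev_nseq -nseqD subnK // lex_le_refl.
have size_take : size (take m c) = m by rewrite size_takel // ltnW.
move: c_le; rewrite -[c in all _ c](cat_take_drop m) all_cat => /andP[take_le _].
rewrite -[c in c ++ K](cat_take_drop m) -[c in rev c](cat_take_drop m) rev_cat.
rewrite -catA lex_le_cat ?size_nseq //; case: eqP => [-> | _]; last first.
  by have := lex_le_nseq take_le; rewrite size_take.
rewrite rev_nseq /= lex_le_cat ?size_rev //.
by case: eqP => [d_pal | _]; rewrite ?lex_le_refl // -d_pal lex_le_refl.
Qed.

Lemma lex_le_rcons_rev_succ d a :
  lex_le (rcons d a) (a :: rev d) -> lex_le (rcons d a.+1) (a.+1 :: rev d).
Proof.
case: d => [|y d]; first by rewrite /= !ltnn !eqxx.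
by rewrite rcons_cons => /lex_le_cons_leq le_ya; rewrite /= ltnS le_ya.
Qed.

Variable v : seq nat.
Hypothesis v_le_M : all (fun y => y <= M) v.
Local Notation w b := (v ++ b :: K).

Lemma rev_cat_cons_nseq b : rev (w b) = K ++ rev (rcons v b).
Proof. by rewrite rev_cat_cons rev_nseq rev_rcons. Qed.

Lemma lex_le_rev_catE b : b <= M -> m <= size v ->
  lex_le (w b) (rev (w b)) =
  (take m v != K) || lex_le (rcons (drop m v) b) (b :: rev (drop m v)).
Proof.
move=> le_bM le_mv; rewrite rev_cat_cons_nseq -cat_rcons lex_le_cat_nseq_rev.
  by rewrite -cats1 takel_cat // cats1 drop_rcons // rev_rcons.
by rewrite all_rcons le_bM.
Qed.

Variable a : nat.
Hypotheses (a_lt_M : a < M) (le_rev_w : lex_le (w a) (rev (w a))).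

Lemma lex_le_rev_succ : lex_le (w a.+1) (rev (w a.+1)).
Proof.
have [le_mv | lt_vm] := leqP m (size v).
  move: le_rev_w; rewrite !lex_le_rev_catE // 1?ltnW //.
  by case/orP => [-> // | /lex_le_rcons_rev_succ ->]; rewrite orbT.
rewrite rev_cat_cons_nseq -cat_rcons lex_le_cat_nseq_rev ?all_rcons ?v_le_M ?andbT //.
by rewrite drop_oversize ?size_rcons // orbT.
Qed.

Lemma palindrome_succ_cases : w a.+1 = rev (w a.+1) ->
  (v = nseq (size v) M /\ size v < m /\ a.+1 = M) \/ v = K.
Proof.
rewrite rev_cat_cons_nseq -cat_rcons => pal.
have [lt_vm | le_mv] := ltnP (size v) m.
  left; have := congr1 (take (size v).+1) pal.
  rewrite take_size_cat ?size_rcons // takel_cat ?size_nseq // take_nseq //.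
  by rewrite -[(size v).+1]addn1 nseqD cats1 => /rcons_inj [<- ->].
have take_v : take m v = K.
  have := congr1 (take m) pal.
  by rewrite takel_cat ?size_rcons 1?ltnW // -cats1 takel_cat // take_size_cat ?size_nseq.
have := congr1 (drop m) pal.
rewrite drop_cat size_rcons ltnS le_mv drop_size_cat ?size_nseq // drop_rcons //.
rewrite -[v in rev (rcons v _)](cat_take_drop m) take_v rev_rcons rev_cat rev_nseq.
move=> /eqP; rewrite -cat_cons eqseq_cat; last by rewrite size_rcons /= size_rev.
case/andP => /eqP pal_d _.
move: le_rev_w; rewrite lex_le_rev_catE ?(ltnW a_lt_M) // take_v eqxx /=.
case E : (drop m v) pal_d => [|y d] pal_d.
  by right; rewrite -(cat_take_drop m v) take_v E cats0.
by case: pal_d => -> _ /lex_le_cons_leq; rewrite ltnn.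
Qed.
End MaxRun.

Lemma drop_eq_nseq (s : seq nat) M i :
  drop i s = nseq (size s - i) M <-> forall j, i <= j < size s -> nth 0 s j = M.
Proof.
split=> [drop_i j /andP[le_ij lt_j] | nth_M].
  by rewrite -(subnKC le_ij) -nth_drop drop_i nth_nseq ifT //; lia.
apply: (@eq_from_nth _ 0) => [|p]; rewrite size_drop ?size_nseq // => lt_p.
by rewrite nth_drop nth_nseq lt_p nth_M //; lia.
Qed.

(* The palindrome [take t s] ends with the first letter of [s], which is not [M]. *)
Lemma palindrome_prefix_eq (s : seq nat) (M t l : nat) :
  0 < t <= size s -> 0 < l <= size s -> nth 0 s 0 != M ->
  take t s = rev (take t s) -> drop t s = nseq (size s - t) M ->
  nth 0 s l.-1 != M -> drop l s = nseq (size s - l) M -> t = l.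
Proof.
move=> t_bnd l_bnd s0_M pal_t drop_t sl_M drop_l.
have lt_lt : l.-1 < t.
  rewrite ltnNge; apply: contra sl_M => le_tl; apply/eqP.
  by move/drop_eq_nseq: drop_t => ->; lia.
have st_M : nth 0 s t.-1 != M.
  have lt_t : t.-1 < t by lia.
  have le_ts : t <= size s by lia.
  rewrite -(nth_take 0 lt_t) pal_t nth_rev size_takel //.
  by rewrite (_ : t - t.-1.+1 = 0) ?nth_take //; lia.
have lt_tl : t.-1 < l.
  rewrite ltnNge; apply: contra st_M => le_lt; apply/eqP.
  by move/drop_eq_nseq: drop_l => ->; lia.
lia.
Qed.

Section RaiseBeforeMaxRun.

Variables (M m : nat) (u : seq nat) (a : nat).
Local Notation K := (nseq m M).
Local Notation w b := (u ++ b :: K).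
Hypotheses (u_gt0 : 0 < size u) (w_le_M : all (fun y => y <= M) (w a)) (a_neq_M : a != M).
Hypothesis bracelet_w : is_bracelet (w a).

Lemma u_le_M : all (fun y => y <= M) u.
Proof. by move: w_le_M; rewrite all_cat => /andP[]. Qed.

Lemma a_lt_M : a < M.
Proof. by move: w_le_M; rewrite all_cat /= ltn_neqAle a_neq_M => /and3P[]. Qed.

Lemma w_succ_le_M : all (fun y => y <= M) (w a.+1).
Proof. by rewrite all_cat u_le_M /= a_lt_M; move: w_le_M; rewrite all_cat => /and3P[]. Qed.

Lemma size_w b : size (w b) = size u + m.+1.
Proof. by rewrite size_cat /= size_nseq. Qed.

Lemma nth_w0 b : nth 0 (w b) 0 = nth 0 u 0.
Proof. by rewrite nth_cat u_gt0. Qed.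

Lemma nth_w_ge b i : b <= M -> size u <= i < size (w b) -> b <= nth 0 (w b) i.
Proof.
move=> le_bM /andP[le_ui lt_i]; rewrite nth_cat ltnNge le_ui /=; rewrite size_w in lt_i.
case E : (i - size u) => [|p] //=; rewrite nth_nseq ifT //; lia.
Qed.

Lemma head_le_a : nth 0 u 0 <= a.
Proof.
have /is_braceletP[Brot _] := bracelet_w.
have lt_u : size u < size (w a) by rewrite size_w; lia.
have := Brot _ lt_u; rewrite rot_size_cat -(nth_w0 a).
by case: (w a) => [|y s] //= /lex_le_cons_leq.
Qed.

Lemma drop_u_le_M t : all (fun y => y <= M) (drop t u).
Proof. by apply/allP => y /mem_drop /(allP u_le_M). Qed.

Lemma lex_le_rot_succ i : i < size (w a.+1) -> lex_le (w a.+1) (rot i (w a.+1)).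
Proof.
have [-> _ | i_gt0] := posnP i; first by rewrite rot0 lex_le_refl.
have [le_iu _ | lt_ui lt_i] := leqP i (size u); last first.
  apply: lex_le_nth0; first by rewrite size_rot; lia.
  rewrite nth_rot0 // nth_w0; apply: leq_ltn_trans head_le_a (nth_w_ge a_lt_M _); lia.
set L := (size u - i).+1.
have w_split b : w b = take L u ++ (drop L u ++ b :: K) by rewrite catA cat_take_drop.
have rot_split b : rot i (w b) = rcons (drop i u) b ++ (K ++ take i u).
  by rewrite rot_catl // cat_rcons.
have size_L : size (take L u) = (size (drop i u)).+1.
  by rewrite size_drop size_takel /L; lia.
have le_prefix : lex_le (take L u) (rcons (drop i u) a).
  have /is_braceletP[Brot _] := bracelet_w.
  have lt_i : i < size (w a) by rewrite size_w; lia.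
  move: (Brot _ lt_i); rewrite rot_split w_split lex_le_cat ?size_rcons //.
  by case: eqP => [-> _ | _]; rewrite ?lex_le_refl.
by rewrite rot_split w_split lex_le_cat_rcons_succ.
Qed.

Lemma lex_le_rev_rotE b t : t <= size u ->
  lex_le (w b) (rev (rot t (w b))) =
  if take t u == rev (take t u)
  then lex_le (drop t u ++ b :: K) (rev (drop t u ++ b :: K))
  else lex_le (take t u) (rev (take t u)).
Proof.
move=> le_tu; rewrite rot_catl // catA rev_cat -{1}(cat_take_drop t u) -catA.
by rewrite lex_le_cat ?size_rev.
Qed.

Lemma lex_le_rev_rot_succ t : 0 < t <= size (w a.+1) ->
  lex_le (w a.+1) (rev (rot t (w a.+1))).
Proof.
move=> t_bnd; have [le_tu | lt_ut] := leqP t (size u); last first.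
  apply: lex_le_nth0; first by rewrite size_rev size_rot; lia.
  rewrite nth_rev_rot0 // nth_w0; apply: leq_ltn_trans head_le_a (nth_w_ge a_lt_M _); lia.
have /is_braceletP[_ Brev] := bracelet_w.
have t_bnd' : 0 < t <= size (w a) by rewrite size_w; lia.
move: (Brev _ t_bnd'); rewrite !lex_le_rev_rotE //; case: eqP => // _.
exact: (lex_le_rev_succ (drop_u_le_M t) a_lt_M).
Qed.

Lemma bracelet_succ : is_bracelet (w a.+1).
Proof.
by apply/is_braceletP; split=> [i | t]; [apply: lex_le_rot_succ | apply: lex_le_rev_rot_succ].
Qed.

Lemma symmetric_succ_shape :
  ~~ in_rotations (rev (w a)) (w a) -> in_rotations (rev (w a.+1)) (w a.+1) ->
  exists2 t, 0 < t <= size u &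
    [/\ take t u = rev (take t u), drop t u = nseq (size u - t) M,
        size u - t < m & a.+1 = M].
Proof.
move=> asym /in_rotations_revP[t t_bnd rot_t].
have pal_w : w a.+1 = rev (rot t (w a.+1)) by rewrite rot_t revK.
have [le_tu | lt_ut] := leqP t (size u); last first.
  have := congr1 (nth 0 ^~ 0) pal_w; rewrite nth_rev_rot0 // nth_w0 => head_eq.
  have t_rng : size u <= t.-1 < size (w a.+1) by lia.
  have := nth_w_ge a_lt_M t_rng; rewrite -head_eq.
  by have := head_le_a; lia.
have /is_braceletP[_ Brev] := bracelet_w.
have t_bnd' : 0 < t <= size (w a) by rewrite size_w; lia.
move: pal_w (Brev _ t_bnd'); rewrite rot_catl // catA rev_cat.
rewrite -{1}(cat_take_drop t u) -catA => /eqP; rewrite eqseq_cat ?size_rev //.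
case/andP => /eqP pal_p /eqP pal_q.
rewrite lex_le_rev_rotE // -pal_p eqxx => le_rev_q.
case: (palindrome_succ_cases (drop_u_le_M t) a_lt_M le_rev_q pal_q).
  by case=> drop_M [lt_m aM]; exists t; [lia | rewrite -size_drop].
move=> drop_K; case/in_rotations_revP: asym; exists t => //.
rewrite -{1 2}(cat_take_drop t u) drop_K -!catA -{1}(size_takel le_tu).
by apply: rot_cat_palindromes; rewrite // rev_cat_cons rev_nseq.
Qed.

Lemma in_rotations_rev_succ l :
  0 < l <= size u -> nth 0 u l.-1 != M -> drop l u = nseq (size u - l) M ->
  ~~ in_rotations (rev (w a)) (w a) ->
  in_rotations (rev (w a.+1)) (w a.+1) =
  [&& 0 < m, a.+1 == M & is_palindrome (take l u)].
Proof.
move=> l_bnd ul_M drop_l asym; apply/idP/and3P.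
  case/(symmetric_succ_shape asym) => t t_bnd [pal_t drop_t lt_m aM].
  have u0_M : nth 0 u 0 != M by rewrite neq_ltn (leq_ltn_trans head_le_a a_lt_M).
  have t_l := palindrome_prefix_eq t_bnd l_bnd u0_M pal_t drop_t ul_M drop_l.
  by split; [lia | apply/eqP | apply/eqP; rewrite -t_l].
case=> _ /eqP aM /eqP pal_l; apply/in_rotations_revP; exists l.
  by rewrite size_w; lia.
rewrite -{1 2}(cat_take_drop l u) drop_l aM -catA -[M :: _]/(nseq m.+1 M) -nseqD.
rewrite -{1}(size_takel (proj2 (andP l_bnd))).
by apply: rot_cat_palindromes; rewrite ?rev_nseq.
Qed.

Lemma nth_w_last b : nth 0 (w b) (size u + m) = if m is 0 then b else M.
Proof.
rewrite nth_cat ltnNge leq_addr /= addKn.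
by case: m => [|p] //; rewrite -[nth 0 _ p.+1]/(nth 0 (nseq p.+1 M) p) nth_nseq ltnSn.
Qed.

Lemma LastNonMax_succ_cases l :
  0 < l <= size u -> nth 0 (w a) l.-1 != M ->
  (forall i, l <= i < size u -> nth 0 (w a) i = M) ->
  ~~ in_rotations (rev (w a)) (w a) ->
  if [|| nth 0 (w a) (size u + m) < M, a < M.-1 | ~~ is_palindrome (take l (w a))]
  then is_bracelet (w a.+1) && asymmetric_necklace (w a.+1)
  else symmetric_bracelet (w a.+1).
Proof.
move=> l_bnd wl_M w_M asym; have lt_l : l.-1 < size u by lia.
have nth_u i : i < size u -> nth 0 (w a) i = nth 0 u i by move=> lt_i; rewrite nth_cat lt_i.
have drop_l : drop l u = nseq (size u - l) M.
  by apply/drop_eq_nseq => i i_bnd; rewrite -nth_u ?w_M //; lia.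
rewrite nth_u // in wl_M.
have -> : [|| nth 0 (w a) (size u + m) < M, a < M.-1 | ~~ is_palindrome (take l (w a))] =
    ~~ in_rotations (rev (w a.+1)) (w a.+1).
  rewrite (in_rotations_rev_succ l_bnd wl_M drop_l asym) takel_cat ?nth_w_last; last by lia.
  case: (m) => [|p]; first by rewrite a_lt_M.
  have lt_aM := a_lt_M.
  by rewrite ltnn /= (_ : (a < M.-1) = (a.+1 != M)) //; apply/idP/idP; lia.
rewrite /asymmetric_necklace /symmetric_bracelet /symmetric_necklace.
by rewrite bracelet_succ bracelet_necklace ?bracelet_succ //; case: ifP => // /negbFE.
Qed.

End RaiseBeforeMaxRun.

Lemma cat_take_nth_nseq (s : seq nat) M j : 0 < j <= size s ->
  (forall i, j < i <= size s -> nth 0 s i.-1 = M) ->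
  s = take j.-1 s ++ nth 0 s j.-1 :: nseq (size s - j) M.
Proof.
move=> j_bnd nth_M; have lt_j : j.-1 < size s by lia.
rewrite -[s in LHS](cat_take_drop j.-1) (drop_nth 0 lt_j) prednK; last by lia.
by congr (_ ++ _ :: _); apply/drop_eq_nseq => i i_bnd; apply: (nth_M i.+1); lia.
Qed.

Lemma LastNonMax_cat k u a m : a != k.-1 ->
  LastNonMax k (u ++ a :: nseq m k.-1) = u ++ a.+1 :: nseq m k.-1.
Proof.
move=> a_max; rewrite /LastNonMax rev_cat_cons rev_nseq find_cat has_nseq eqxx andbF.
rewrite size_nseq /= a_max addn0 size_cat /= size_nseq -addSnnS addnK.
by rewrite take_size_cat // nth_cat ltnn subnn.
Qed.

Theorem mainTheorem5 (n k : nat) (alpha : seq nat) (j l : nat) :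
  3 <= n -> 3 <= k -> in_A k n alpha ->
  1 <= j <= n -> nth 0 alpha j.-1 != k.-1 ->
  (forall i, j < i <= n -> nth 0 alpha i.-1 = k.-1) ->
  1 <= l < j -> nth 0 alpha l.-1 != k.-1 ->
  (forall i, l < i < j -> nth 0 alpha i.-1 = k.-1) ->
  (if [|| nth 0 alpha n.-1 < k.-1, nth 0 alpha j.-1 < k.-2
        | ~~ is_palindrome (take l alpha)]
   then in_A k n (LastNonMax k alpha)
   else symmetric_bracelet (LastNonMax k alpha)).
Proof.
move=> _ k3 /and4P[/eqP size_alpha alpha_k bracelet_alpha /andP[_ asym_alpha]].
set M := k.-1; set u := take j.-1 alpha; set a := nth 0 alpha j.-1.
move=> j_bnd aj_M after l_bnd al_M between.
have size_u : size u = j.-1 by rewrite size_takel // size_alpha; lia.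
have alphaE : alpha = u ++ a :: nseq (n - j) M.
  by rewrite {1}(@cat_take_nth_nseq alpha M j) size_alpha.
have alpha_le_M : all (fun y => y <= M) alpha by apply: sub_all alpha_k => y /=; lia.
clearbody u a; subst alpha.
have u_gt0 : 0 < size u by lia.
have l_bnd_u : 0 < l <= size u by lia.
have between_u i : l <= i < size u -> nth 0 (u ++ a :: nseq (n - j) M) i = M.
  by move=> i_bnd; apply: (between i.+1); lia.
have := LastNonMax_succ_cases u_gt0 alpha_le_M aj_M bracelet_alpha
  l_bnd_u al_M between_u asym_alpha.
rewrite LastNonMax_cat // (_ : n.-1 = size u + (n - j)); last by lia.
case: ifP => // _ /andP[bracelet_beta asym_beta]; apply/and4P; split=> //.
  by rewrite size_cat /= size_nseq; lia.
by rewrite -/M; apply: sub_all (w_succ_le_M alpha_le_M aj_M) => y /=; lia.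
Qed.
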